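(* For partitions $\lambda$ and $\mu$, $h_\lambda[\Xi_\mu]=|\mathcal C_{\lambda,\mu}|$, where $\mathcal C_{\lambda,\mu}$ is the set of sequences $(\alpha^{(1)},\ldots,\alpha^{(\ell(\lambda))})$ of weak compositions such that $\alpha^{(i)}$ is a weak composition of $\lambda_i$ of length $\ell(\mu)$ and $\mu_j$ divides $\alpha^{(i)}_j$ for all $1\le i\le\ell(\lambda)$, $1\le j\le\ell(\mu)$.
   Context: A weak composition of $m$ of length $\ell$ is a sequence of $\ell$ nonnegative integers summing to $m$. For $f\in Sym$ and a partition $\mu$, $f[\Xi_\mu]$ denotes $f$ evaluated at the multiset of eigenvalues of a permutation matrix of cycle type $\mu$ (the $\mu_i$-th roots of unity for each part $\mu_i$); equivalently substitute $p_k\mapsto\sum_{d\mid k}d\,m_d(\mu)$. $h_\lambda=h_{\lambda_1}\cdots h_{\lambda_{\ell(\lambda)}}$. *)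

From HB Require Import structures.
From mathcomp Require Import all_boot all_order all_algebra all_field.
Set Implicit Arguments. Unset Strict Implicit. Unset Printing Implicit Defensive.
Import Order.TTheory GRing.Theory Num.Theory.
Local Open Scope ring_scope.

Definition is_partition (la : seq nat) : bool :=
  sorted geq la && all (fun k => 0 < k)%N la.

Definition prim_root (m : nat) : algC :=
  match m with
  | 0 => 1
  | m'.+1 => sval (C_prim_root_exists (ltn0Sn m'))
  end.

Definition roots_of_unity (m : nat) : seq algC :=
  [seq prim_root m ^+ k | k <- iota 0 m].

(* Xi_mu: eigenvalues of a permutation matrix of cycle type mu. *)
Definition Xi (mu : seq nat) : seq algC := flatten (map roots_of_unity mu).

Definition h_eval (k : nat) (xs : seq algC) : algC :=
  \sum_(b : {ffun 'I_(size xs) -> 'I_k.+1} | (\sum_(i : 'I_(size xs)) (b i : nat))%N == k)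
     \prod_(i : 'I_(size xs)) xs`_i ^+ b i.

Definition h_part_eval (la : seq nat) (xs : seq algC) : algC :=
  \prod_(k <- la) h_eval k xs.

(* The set C_{la,mu}: alpha i j is the j-th entry of the weak composition
   alpha^(i); entries are bounded by sumn la (automatic, since
   alpha^(i)_j <= la_i), which only serves to make the type finite. *)
Definition Cset (la mu : seq nat) :
  {set {ffun 'I_(size la) * 'I_(size mu) -> 'I_(sumn la).+1}} :=
  [set alpha : {ffun 'I_(size la) * 'I_(size mu) -> 'I_(sumn la).+1} | [forall i : 'I_(size la),
       ((\sum_(j < size mu) (alpha (i, j) : nat))%N == nth 0%N la i)
       && [forall j : 'I_(size mu), (nth 0%N mu j %| alpha (i, j))%N]]].

From HB Require Import structures.
From mathcomp Require Import all_boot all_order all_algebra all_field.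
Import Order.TTheory GRing.Theory Num.Theory.
Local Open Scope ring_scope.
Set Implicit Arguments. Unset Strict Implicit. Unset Printing Implicit Defensive.

(* h_k evaluated at a multiset xs is the coefficient of t^k in
   prod_(x in xs) 1/(1 - x t). Since prod_(z^m = 1) (1 - z t) = 1 - t^m, the
   roots of unity coming from a part m of mu contribute
   1/(1 - t^m) = sum_(m | a) t^a, so h_k[Xi_mu] is the coefficient of t^k in
   prod_j sum_(mu_j | a) t^a: the number of weak compositions of k of length
   l(mu) whose j-th entry is a multiple of mu_j. Multiplying over the parts
   of lambda counts C_{lambda,mu}. Power series are represented by
   polynomials truncated with take_poly below a fixed degree. *)

Section TruncatedSeries.
Variable R : comNzRingType.
Implicit Types (p q c : {poly R}) (w : nat -> R).

Lemma take_poly_poly m n (E : nat -> R) :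
  (m <= n)%N -> take_poly m (\poly_(i < n) E i) = \poly_(i < m) E i.
Proof.
move=> le_mn; apply/polyP => i; rewrite coef_take_poly !coef_poly.
by case: ltnP => // lt_im; rewrite (leq_trans lt_im le_mn).
Qed.

Lemma take_polyMl n p q : take_poly n (take_poly n p * q) = take_poly n (p * q).
Proof.
rewrite -[in RHS](poly_take_drop n p) mulrDl take_polyD mulrAC.
by rewrite take_polyMXn_0 addr0.
Qed.

Lemma take_polyMr n p q : take_poly n (p * take_poly n q) = take_poly n (p * q).
Proof. by rewrite mulrC take_polyMl mulrC. Qed.

Lemma take_poly_prod n (I : Type) (r : seq I) (F : I -> {poly R}) :
  take_poly n (\prod_(i <- r) take_poly n (F i)) = take_poly n (\prod_(i <- r) F i).
Proof.
elim: r => [|x r IHr]; first by rewrite !big_nil.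
by rewrite !big_cons take_polyMl -take_polyMr IHr take_polyMr.
Qed.

Lemma coef_prod_take_poly n k (I : Type) (r : seq I) (F : I -> {poly R}) :
  (k < n)%N -> (\prod_(i <- r) take_poly n (F i))`_k = (\prod_(i <- r) F i)`_k.
Proof.
move=> lt_kn; have coef_take p : p`_k = (take_poly n p)`_k by rewrite coef_take_poly lt_kn.
by rewrite coef_take take_poly_prod -coef_take.
Qed.

Lemma take_poly_mul_cancel n p q c :
  take_poly n (p * c) = take_poly n 1 -> take_poly n (q * c) = take_poly n 1 ->
  take_poly n p = take_poly n q.
Proof.
move=> pc1 qc1.
rewrite -[p]mulr1 -take_polyMr -qc1 take_polyMr mulrCA -take_polyMr pc1.
by rewrite take_polyMr mulr1.
Qed.

Lemma take_poly_series_recurrence n m a w :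
  (0 < m)%N -> w 0%N = 1 -> (forall i, (0 < i < m)%N -> w i = 0) ->
  (forall i, w (i + m)%N = a * w i) ->
  take_poly n (\poly_(i < n) w i * (1 - a *: 'X^m)) = take_poly n 1.
Proof.
move=> m_gt0 w0 w_small w_rec; apply/polyP => i.
rewrite !coef_take_poly; case: ltnP => // lt_in.
rewrite mulrBr mulr1 -scalerAr coefB coefZ coefMXn coef1 !coef_poly lt_in.
case: ltnP => [lt_im|le_mi].
  by case: i lt_in lt_im => [|i] _ lt_im; rewrite ?w0 ?w_small ?mulr0 ?subr0.
rewrite (leq_ltn_trans (leq_subr m i) lt_in) -[in w i](subnK le_mi) w_rec.
by rewrite subrr gtn_eqF // (leq_trans m_gt0 le_mi).
Qed.

Lemma coef_prod_poly_ffun n B (W : 'I_n -> nat -> R) k :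
  (\prod_(i < n) \poly_(a < B.+1) W i a)`_k =
  \sum_(f : {ffun 'I_n -> 'I_B.+1} | (\sum_i (f i : nat))%N == k) \prod_i W i (f i).
Proof.
under eq_bigr do rewrite poly_def.
rewrite bigA_distr_bigA coef_sum [RHS]big_mkcond; apply: eq_bigr => f _ /=.
under eq_bigr do rewrite -mul_polyC.
rewrite big_split /= -rmorph_prod prodrXr coefCM coefXn.
by case: eqP => [->|/nesym/eqP/negbTE->]; rewrite ?eqxx ?mulr1 ?mulr0.
Qed.

Lemma take_poly_geometric n (x : R) :
  take_poly n (\poly_(a < n) x ^+ a * (1 - x *: 'X)) = take_poly n 1.
Proof.
rewrite -['X]expr1; apply: take_poly_series_recurrence => // a.
  by case: a => [|[]].
by rewrite addn1 exprS.
Qed.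

Lemma take_poly_dvdn_series n m : (0 < m)%N ->
  take_poly n (\poly_(a < n) (m %| a)%:R * (1 - 'X^m)) = take_poly n 1 :> {poly R}.
Proof.
move=> m_gt0; rewrite -['X^m]scale1r.
apply: take_poly_series_recurrence; rewrite ?dvdn0 // => a.
  by case/andP=> a_gt0 lt_am; rewrite gtnNdvd.
by rewrite dvdn_addl // mul1r.
Qed.
End TruncatedSeries.

Section PrimitiveRoot.
Variables (R : fieldType) (m : nat) (z : R).
Hypothesis prim_z : m.-primitive_root z.

Lemma prod_1subZX_prim_root :
  \prod_(0 <= k < m) (1 - z ^+ k *: 'X) = 1 - 'X^m :> {poly R}.
Proof.
have m_gt0 := prim_order_gt0 prim_z.
have [y prim_y zy] : exists2 y, m.-primitive_root y & z * y = 1.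
  exists (z ^+ m.-1); last by rewrite -exprS prednK // prim_expr_order.
  by rewrite prim_root_exp_coprime // -(prednK m_gt0) coprimenS.
have zy1 k : z ^+ k * y ^+ k = 1 by rewrite -exprMn zy expr1n.
have factorE k : 1 - z ^+ k *: 'X = (- z ^+ k)%:P * ('X - (y ^+ k)%:P) :> {poly R}.
  by rewrite mulrBr -polyCM mulNr zy1 mul_polyC scaleNr polyCN opprK addrC.
have prodE : \prod_(0 <= k < m) (1 - z ^+ k *: 'X)
    = (\prod_(0 <= k < m) - z ^+ k)%:P * ('X^m - 1) :> {poly R}.
  under eq_bigr do rewrite factorE.
  by rewrite big_split /= rmorph_prod (factor_Xn_sub_1 prim_y).
have const_eq : \prod_(0 <= k < m) - z ^+ k = -1.
  have /(congr1 (horner^~ 0)) := prodE.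
  rewrite horner_prod /= hornerM_comm; last exact: mulrC.
  under eq_bigr do rewrite hornerD hornerN hornerZ hornerX mulr0 subr0 hornerC.
  rewrite big1_eq hornerC hornerD hornerN hornerXn expr0n gtn_eqF // hornerC sub0r mulrN1.
  by move/(congr1 -%R); rewrite opprK.
by rewrite prodE const_eq polyCN polyC1 mulN1r opprB.
Qed.

Lemma take_poly_prod_prim_root_series n :
  take_poly n (\prod_(0 <= k < m) \poly_(a < n) (z ^+ k) ^+ a)
  = \poly_(a < n) (m %| a)%:R.
Proof.
rewrite -[RHS](take_poly_id (size_poly _ _)).
apply: (@take_poly_mul_cancel _ _ _ _ (1 - 'X^m)).
  rewrite -prod_1subZX_prim_root -big_split -take_poly_prod /=.
  under eq_bigr do rewrite take_poly_geometric.
  by rewrite take_poly_prod big1_eq.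
exact/take_poly_dvdn_series/(prim_order_gt0 prim_z).
Qed.

End PrimitiveRoot.

Lemma card_ffun_curry (I J T : finType) (P : I -> {pred {ffun J -> T}}) :
  #|[set a : {ffun I * J -> T} | [forall i, [ffun j => a (i, j)] \in P i]]|
  = \prod_i #|P i|.
Proof.
pose curry (a : {ffun I * J -> T}) := [ffun i => [ffun j => a (i, j)]].
pose uncurry (b : {ffun I -> {ffun J -> T}}) := [ffun ij : I * J => b ij.1 ij.2].
have curryK : cancel curry uncurry.
  by move=> a; apply/ffunP => -[i j]; rewrite !ffunE.
have uncurryK : cancel uncurry curry.
  by move=> b; apply/ffunP => i; apply/ffunP => j; rewrite !ffunE.
have -> : [set a : {ffun I * J -> T} | [forall i, [ffun j => a (i, j)] \in P i]]
    = curry @^-1: family P.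
  by apply/setP => a; rewrite !inE; apply/forallP/familyP => Pa i; have := Pa i; rewrite ffunE.
rewrite on_card_preimset; last by exists uncurry => b _; rewrite ?curryK ?uncurryK.
by rewrite card_family foldrE big_map big_enum.
Qed.

Lemma nth_leq_sumn (s : seq nat) i : (nth 0 s i <= sumn s)%N.
Proof.
elim: s i => [|x s IHs] [|i] //=; first exact: leq_addr.
exact: leq_trans (IHs i) (leq_addl _ _).
Qed.

Lemma prim_root_primitive m : (0 < m)%N -> m.-primitive_root (prim_root m).
Proof. by case: m => // m _; rewrite /prim_root; case: C_prim_root_exists. Qed.

Lemma take_poly_prod_roots_of_unity_series n m :
  take_poly n (\prod_(x <- roots_of_unity m) \poly_(a < n) x ^+ a)
  = \poly_(a < n) (m %| a)%:R.
Proof.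
case: m => [|m].
  rewrite big_nil; apply/polyP => i; rewrite coef_take_poly !coef_poly coef1 dvd0n.
  by case: ltnP.
have := take_poly_prod_prim_root_series (prim_root_primitive (ltn0Sn m)) n.
by rewrite /roots_of_unity big_map /index_iota subn0.
Qed.

Lemma h_eval_coef_series n k (xs : seq algC) : (k < n)%N ->
  h_eval k xs = (\prod_(x <- xs) \poly_(a < n) x ^+ a)`_k.
Proof.
move=> lt_kn; rewrite -(coef_prod_take_poly _ _ (ltnSn k)).
under eq_bigr do rewrite take_poly_poly //.
by rewrite (big_nth 0) big_mkord coef_prod_poly_ffun.
Qed.

Lemma h_eval_Xi n k mu : (k < n)%N ->
  h_eval k (Xi mu) = (\prod_(m <- mu) \poly_(a < n) (m %| a)%:R)`_k.
Proof.
move=> lt_kn; rewrite (h_eval_coef_series _ lt_kn) /Xi big_flatten big_map /=.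
rewrite -(coef_prod_take_poly _ _ lt_kn).
by under eq_bigr do rewrite take_poly_prod_roots_of_unity_series.
Qed.

Lemma prodr_natb (R : comPzSemiRingType) (I : finType) (b : pred I) :
  \prod_i (b i)%:R = [forall i, b i]%:R :> R.
Proof.
have [b_all | not_all] := boolP [forall i, b i].
  by apply: big1 => i _; rewrite (forallP b_all).
have [i /negbTE b_i] := forallPn not_all.
by rewrite (bigD1 i) //= b_i mul0r.
Qed.

Lemma card_dvdn_compositions B (k : nat) (d : seq nat) :
  (#|[set g : {ffun 'I_(size d) -> 'I_B.+1} | ((\sum_(j < size d) (g j : nat))%N == k)
        && [forall j : 'I_(size d), (nth 0 d j %| g j)%N]]|)%:R
  = (\prod_(m <- d) \poly_(a < B.+1) (m %| a)%:R)`_k :> algC.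
Proof.
rewrite (big_nth 0) big_mkord coef_prod_poly_ffun -sum1_card natr_sum.
rewrite big_mkcond [RHS]big_mkcond; apply: eq_bigr => g _.
by rewrite inE prodr_natb; case: eqP => //= _; case: [forall _, _].
Qed.

Theorem proposition29 (la mu : seq nat) :
  is_partition la -> is_partition mu ->
  h_part_eval la (Xi mu) = (#|Cset la mu|)%:R.
Proof.
move=> _ _.
set row := fun i : 'I_(size la) =>
  [set g : {ffun 'I_(size mu) -> 'I_(sumn la).+1} |
     ((\sum_(j < size mu) (g j : nat))%N == nth 0 la i)
     && [forall j : 'I_(size mu), (nth 0 mu j %| g j)%N]].
have -> : Cset la mu = [set a : {ffun 'I_(size la) * 'I_(size mu) -> 'I_(sumn la).+1} |
                          [forall i, [ffun j => a (i, j)] \in row i]].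
  apply/setP => a; rewrite !inE; apply: eq_forallb => i.
  rewrite inE; under [in RHS]eq_bigr do rewrite ffunE.
  by congr andb; apply: eq_forallb => j; rewrite ffunE.
rewrite card_ffun_curry natr_prod /h_part_eval (big_nth 0) big_mkord.
apply: eq_bigr => i _.
by rewrite (@h_eval_Xi (sumn la).+1) ?ltnS ?nth_leq_sumn // card_dvdn_compositions.
Qed.
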